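(* Let $G=(V,E)$ be a strongly connected digraph with $V=\{v_1,\dots,v_n\}$. Then every evolution $(A_k)_{k\geq 0}$ of the set-valued map $f_{\mathrm{imcor}}$ on $\operatorname{Adj}(G)$ (i.e., any $A_0\in\operatorname{Adj}(G)$ and $A_{k+1}\in f_{\mathrm{imcor}}(A_k)$ for all $k$) converges in finite time to a weight-balanced adjacency matrix: there exists $K$ such that $A_K$ is weight-balanced and $A_k=A_K$ for all $k\geq K$.
   Context: A digraph $G=(V,E)$ has finite vertex set $V$ and edge set $E\subseteq V\times V$; it is strongly connected if there is a directed path between every ordered pair of distinct vertices. $\operatorname{Adj}(G)$ is the set of matrices $A=(a_{ij})\in\mathbb{R}^{n\times n}_{\geq0}$ with $a_{ij}>0$ if $(v_i,v_j)\in E$ and $a_{ij}=0$ otherwise. For $A\in\operatorname{Adj}(G)$, the imbalance of $v_i$ is $\omega(v_i)=\sum_{j}a_{ji}-\sum_j a_{ij}$, and $A$ is weight-balanced if $\omega(v_i)=0$ for all $i$. For $A\in\operatorname{Adj}(G)$ and each $i$, let $a_i^*=\min\{a_{ik}: k\in\{1,\dots,n\}\setminus\{i\},\ a_{ik}\neq0\}$ and $J_i^*=\{j\in\{1,\dots,n\}\setminus\{i\}: a_{ij}=a_i^*\}$. The map $f_{\mathrm{imcor}}:\operatorname{Adj}(G)\rightrightarrows\operatorname{Adj}(G)$ assigns to $A$ the set of all $B\in\operatorname{Adj}(G)$ such that for each $i$ there exists $j_i^*\in J_i^*$ with $b_{ij}=a_{ij}+\omega(v_i)$ if $\omega(v_i)>0$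 and $j=j_i^*$, and $b_{ij}=a_{ij}$ otherwise (imbalances computed with respect to $A$). This models a synchronous algorithm in which each agent with positive imbalance adds its imbalance to one of its out-edges (to a vertex other than itself) of minimum weight. *)

From mathcomp Require Import all_boot all_order all_algebra.
From mathcomp Require Import reals.
Set Implicit Arguments. Unset Strict Implicit. Unset Printing Implicit Defensive.
Import Order.TTheory GRing.Theory Num.Theory.
Local Open Scope ring_scope.

(* Digraph G = (V, E) with V = 'I_n (vertex v_i is i), E given by a boolean
   relation: (v_i, v_j) \in E  iff  E i j. Self loops are allowed. *)

Definition strongly_connected (n : nat) (E : rel 'I_n) : Prop :=
  forall i j : 'I_n, i != j -> connect E i j.

Definition in_Adj (R : realType) (n : nat) (E : rel 'I_n) (A : 'M[R]_n) : Prop :=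
  forall i j : 'I_n, (E i j -> 0 < A i j) /\ (~~ E i j -> A i j = 0).

Definition imbalance (R : realType) (n : nat) (A : 'M[R]_n) (i : 'I_n) : R :=
  \sum_(j < n) A j i - \sum_(j < n) A i j.

Definition weight_balanced (R : realType) (n : nat) (A : 'M[R]_n) : Prop :=
  forall i : 'I_n, imbalance A i = 0.

Definition in_Jstar (R : realType) (n : nat) (A : 'M[R]_n) (i j : 'I_n) : Prop :=
  j != i /\ A i j != 0 /\ (forall k : 'I_n, k != i -> A i k != 0 -> A i j <= A i k).

Definition f_imcor (R : realType) (n : nat) (E : rel 'I_n) (A B : 'M[R]_n) : Prop :=
  in_Adj E B /\
  (forall i : 'I_n,
    if (0 < imbalance A i)%R then
      (exists js : 'I_n, in_Jstar A i js /\
        (forall j : 'I_n, B i j = (if j == js then A i j + imbalance A i else A i j)))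
    else (forall j : 'I_n, B i j = A i j)).

From mathcomp Require Import all_boot all_order all_algebra.
From mathcomp Require Import reals lra.
From Stdlib Require Import Classical.
Import Order.TTheory GRing.Theory Num.Theory.
Local Open Scope ring_scope.

(* Entries never decrease and a nonnegative imbalance stays nonnegative, so the
   set of vertices with negative imbalance shrinks and eventually freezes;
   suppose it is nonempty. From then on every positive imbalance is at least a
   fixed m > 0, since positive imbalance is only ever handed over whole from a
   positive vertex, so some vertex is positive infinitely often. Such a vertex
   raises each of its out-neighbours infinitely often: otherwise its row capped
   at a_ij + m gains m every time it is positive, yet stays bounded. A vertex
   raised infinitely often is itself positive infinitely often, because a frozen
   negative vertex cannot absorb infinitely many gains of size m. By strong
   connectivity a frozen negative vertex would be positive infinitely often, a
   contradiction. So eventually no imbalance is negative, which as imbalances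
   sum to zero means the matrix is balanced, and f_imcor then fixes it. *)

Definition recurrent (P : nat -> Prop) : Prop :=
  forall k, exists2 k', (k <= k')%N & P k'.

Lemma not_recurrentP (P : nat -> Prop) :
  ~ recurrent P -> exists k0, forall k, (k0 <= k)%N -> ~ P k.
Proof.
move=> notP; apply: NNPP => never; apply: notP => k0.
apply: NNPP => noP; apply: never; exists k0 => k k0k Pk.
by apply: noP; exists k.
Qed.

Lemma eventually_const (T : Type) (u : nat -> T) (k0 : nat) :
  (forall k, (k0 <= k)%N -> u k.+1 = u k) -> forall k, (k0 <= k)%N -> u k = u k0.
Proof.
move=> step k /subnK <-; elim: (k - k0)%N => [|d IH]; first by rewrite add0n.
by rewrite addSn step ?IH // leq_addl.
Qed.

Lemma nonincreasing_nat_stable (f : nat -> nat) :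
  (forall k, (f k.+1 <= f k)%N) -> exists K, forall k, (K <= k)%N -> f k = f K.
Proof.
move=> step.
have mono : {homo f : k k' / (k <= k')%N >-> (k' <= k)%N}.
  exact: (homo_leq (r := fun a b => (b <= a)%N) leqnn
                   (fun b a c ba cb => leq_trans cb ba) step).
suff: forall v K, f K = v -> exists K', forall k, (K' <= k)%N -> f k = f K'.
  by move=> stable; exact: stable (f 0%N) 0%N erefl.
elim/ltn_ind=> v IH K fKv.
case: (classic (exists2 K', (K <= K')%N & (f K' < f K)%N)) => [[K' KK' drop] | stable].
  by apply: (IH (f K') _ K') => //; rewrite -fKv.
exists K => k Kk; apply/eqP; rewrite eqn_leq (mono K k Kk) /= leqNgt.
by apply/negP => drop; apply: stable; exists k.
Qed.

Lemma finite_eventually (T : finType) (P : T -> nat -> Prop) :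
  (forall x, exists k0, forall k, (k0 <= k)%N -> P x k) ->
  exists k0, forall x k, (k0 <= k)%N -> P x k.
Proof.
move=> ev.
suff [k0 Pk0] : exists k0, forall x, x \in enum T -> forall k, (k0 <= k)%N -> P x k.
  by exists k0 => x; apply: Pk0; rewrite mem_enum.
elim: (enum T) => [|x s [k0 Pk0]]; first by exists 0%N.
have [kx Pkx] := ev x.
exists (maxn kx k0) => y; rewrite in_cons => /orP [/eqP -> | ys] k;
  rewrite geq_max => /andP [kxk k0k]; [exact: Pkx | exact: Pk0].
Qed.

Lemma recurrent_pigeonhole (T : finType) (P : T -> nat -> Prop) :
  recurrent (fun k => exists x, P x k) -> exists x, recurrent (P x).
Proof.
move=> rec; apply: NNPP => none.
have [k0 notP] : exists k0, forall x k, (k0 <= k)%N -> ~ P x k.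
  apply: finite_eventually => x; apply: not_recurrentP => recx.
  by apply: none; exists x.
have [k k0k [x Pxk]] := rec k0.
exact: notP Pxk.
Qed.

Lemma bounded_nondecreasing_jumps (R : realType) (u : nat -> R) (k0 : nat) (m B : R) :
  0 < m -> (forall k, (k0 <= k)%N -> u k <= u k.+1) ->
  (forall k, (k0 <= k)%N -> u k <= B) ->
  ~ recurrent (fun k => u k + m <= u k.+1).
Proof.
move=> m_gt0 incr bounded jumps.
have mono k k' : (k0 <= k)%N -> (k <= k')%N -> u k <= u k'.
  move=> k0k /subnKC <-; elim: (k' - k)%N => [|d IH]; first by rewrite addn0.
  by rewrite addnS (le_trans IH) // incr // (leq_trans k0k) // leq_addr.
have grow N : exists2 k, (k0 <= k)%N & u k0 + N%:R * m <= u k.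
  elim: N => [|N [k k0k ukN]]; first by exists k0; rewrite ?leqnn // mul0r addr0.
  have [k' kk' jump] := jumps k.
  exists k'.+1; first by rewrite (leq_trans k0k) // (leq_trans kk').
  have := mono k k' k0k kk'; rewrite -addn1 natrD mulrDl mul1r; lra.
have B_ge : 0 <= (B - u k0) / m by apply: divr_ge0; rewrite ?subr_ge0 ?bounded ?ltW.
have := archi_boundP B_ge; rewrite ltr_pdivrMr //.
have [k k0k] := grow (Num.Def.archi_bound ((B - u k0) / m)).
have := bounded k k0k; lra.
Qed.

Lemma exists_pos_lower_bound (R : realDomainType) (T : finType) (f : T -> R) :
  exists2 m, 0 < m & forall x, 0 < f x -> m <= f x.
Proof.
case: (pickP (fun x => 0 < f x)) => [x0 fx0 | nopos]; last first.
  by exists 1 => // x; rewrite nopos.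
case: (@arg_minP _ _ _ x0 (fun x => 0 < f x) f fx0) => x fx min_x.
by exists (f x) => // y; apply: min_x.
Qed.

Section Imbalance.
Context {R : realType} {n : nat}.
Implicit Type A : 'M[R]_n.

Lemma sum_imbalance A : \sum_i imbalance A i = 0.
Proof. by rewrite /imbalance sumrB exchange_big subrr. Qed.

Lemma imbalance_ge0_balanced A : (forall i, 0 <= imbalance A i) -> weight_balanced A.
Proof.
move=> ge0 i.
exact: (@psumr_eq0P _ _ predT (imbalance A) (fun i _ => ge0 i) (sum_imbalance A) i).
Qed.

Lemma exists_pos_imbalance A i : imbalance A i < 0 -> exists j, 0 < imbalance A j.
Proof.
move=> neg; apply: NNPP => nopos.
have le0 j : 0 <= - imbalance A j.
  by rewrite oppr_ge0 leNgt; apply/negP => pos; apply: nopos; exists j.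
have := @psumr_eq0P _ _ predT (fun j => - imbalance A j) (fun j _ => le0 j).
rewrite sumrN sum_imbalance oppr0 => /(_ erefl i erefl) /eqP.
rewrite oppr_eq0 => /eqP; lra.
Qed.

End Imbalance.

Section Step.
Context {R : realType} {n : nat} {E : rel 'I_n} {A B : 'M[R]_n}.
Hypothesis step : f_imcor E A B.
Local Notation w := (imbalance A).

Lemma imcor_le i j : A i j <= B i j.
Proof.
have := step.2 i; case: ifP => [pos [js [_ ->]] | _ ->] //.
by case: (j == js) => //; rewrite lerDl ltW.
Qed.

Lemma imcor_changed i j : B i j != A i j -> 0 < w i /\ B i j - A i j = w i.
Proof.
have := step.2 i; case: ifP => [pos [js [_ ->]] | _ ->]; last by rewrite eqxx.
by case: (j == js) => [_|]; [split => //; lra | rewrite eqxx].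
Qed.

Lemma imcor_rowsum i : \sum_j B i j = \sum_j A i j + Num.max 0 (w i).
Proof.
have := step.2 i; case: (ltrP 0 (w i)) => [_ [js [_ B_i]] | _ B_i]; last first.
  by rewrite addr0; apply: eq_bigr => j _; rewrite B_i.
rewrite (bigD1 js) //= [in RHS](bigD1 js) //= B_i eqxx [RHS]addrAC.
by congr (_ + _); apply: eq_bigr => j /negbTE nj; rewrite B_i nj.
Qed.

Lemma imbalance_imcor l :
  imbalance B l = Num.min 0 (w l) + \sum_j (B j l - A j l).
Proof.
rewrite sumrB [imbalance B l]/imbalance imcor_rowsum /imbalance.
move: (\sum_j B j l) (\sum_j A j l) (\sum_j A l j) => colB colA rowA.
by case: ltrP; lra.
Qed.

Lemma imbalance_imcor_ge l j : Num.min 0 (w l) + (B j l - A j l) <= imbalance B l.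
Proof.
rewrite imbalance_imcor lerD2l (bigD1 j) //= lerDl.
by apply: sumr_ge0 => i _; rewrite subr_ge0 imcor_le.
Qed.

Lemma imbalance_imcor_min l : Num.min 0 (w l) <= imbalance B l.
Proof.
by apply: le_trans (imbalance_imcor_ge l l); rewrite lerDl subr_ge0 imcor_le.
Qed.

Lemma imcor_balanced : weight_balanced A -> B = A.
Proof.
by move=> bal; apply/matrixP => i j; have := step.2 i; rewrite bal ltxx => ->.
Qed.

(* The entry of i chosen at this step is at most a_ij, so its capped value
   rises by at least m. *)
Lemma imcor_capped_rowsum i j m :
  0 < m -> m <= w i -> j != i -> A i j != 0 ->
  \sum_l Num.min (A i l) (A i j + m) + m <= \sum_l Num.min (B i l) (A i j + m).
Proof.
move=> m_gt0 mw ji Aij.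
have := step.2 i; rewrite (lt_le_trans m_gt0 mw) => -[js [[_ [_ js_min]] B_i]].
have Ajs := js_min j ji Aij.
rewrite (bigD1 js) //= [X in _ <= X](bigD1 js) //= B_i eqxx.
rewrite [X in _ <= _ + X](eq_bigr (fun l => Num.min (A i l) (A i j + m))); last first.
  by move=> l /negbTE nl; rewrite B_i nl.
rewrite (min_l (_ : A i js <= A i j + m)); last lra.
have : A i js + m <= Num.min (A i js + w i) (A i j + m).
  by rewrite le_min; apply/andP; split; lra.
lra.
Qed.

End Step.

Section Evolution.
Variables (R : realType) (n : nat) (E : rel 'I_n) (A : nat -> 'M[R]_n).
Hypothesis evolution : forall k, f_imcor E (A k) (A k.+1).
Hypothesis A0_adj : in_Adj E (A 0%N).
Local Notation w k := (imbalance (A k)).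

Lemma evolution_in_Adj k : in_Adj E (A k).
Proof. by case: k => [|k] //; case: (evolution k). Qed.

Lemma raised_imbalance_gain k i j : A k.+1 i j != A k i j ->
  Num.min 0 (w k j) + w k i <= w k.+1 j.
Proof.
move=> ne; have [_ <-] := imcor_changed (evolution k) i j ne.
exact: imbalance_imcor_ge.
Qed.

Definition negatives k := [set l | w k l < 0].

Lemma negatives_step k : negatives k.+1 \subset negatives k.
Proof.
apply/subsetP => l; rewrite !inE !ltNge; apply: contra => ge0.
by apply: le_trans (imbalance_imcor_min (evolution k) l); rewrite min_l.
Qed.

Lemma negatives_eventually_const :
  exists K, forall k, (K <= k)%N -> negatives k = negatives K.
Proof.
have [K cardK] := nonincreasing_nat_stable _
  (fun k => subset_leq_card (negatives_step k)).
exists K; apply: eventually_const => k Kk; apply/eqP.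
by rewrite eqEcard negatives_step /= (cardK _ (leqW Kk)) (cardK _ Kk).
Qed.

Section FrozenNegatives.
Context {K : nat}.
Hypothesis negatives_frozen : forall k, (K <= k)%N -> negatives k = negatives K.

Lemma negative_frozen k l : (K <= k)%N -> (w k l < 0) = (l \in negatives K).
Proof. by move=> Kk; rewrite -(negatives_frozen k Kk) inE. Qed.

Lemma recurrent_pos_not_negative i :
  recurrent (fun k => 0 < w k i) -> i \notin negatives K.
Proof. by move=> /(_ K) [k Kk pos]; rewrite -(negative_frozen k i Kk) -leNgt ltW. Qed.

Lemma exists_recurrent_pos s :
  s \in negatives K -> exists i, recurrent (fun k => 0 < w k i).
Proof.
move=> s_neg; apply: recurrent_pigeonhole => k.
exists (maxn k K); first exact: leq_maxl.
by apply: (@exists_pos_imbalance _ _ _ s); rewrite negative_frozen ?leq_maxr.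
Qed.

Section PositiveLowerBound.
Context {m : R}.
Hypothesis m_gt0 : 0 < m.
Hypothesis pos_ge_m_at_K : forall l, 0 < w K l -> m <= w K l.

Lemma pos_imbalance_ge_m k l : (K <= k)%N -> 0 < w k l -> m <= w k l.
Proof.
elim: k l => [|k IH] l; first by rewrite leqn0 => /eqP <-; apply: pos_ge_m_at_K.
rewrite leq_eqVlt => /orP [/eqP <- | ]; first exact: pos_ge_m_at_K.
rewrite ltnS => Kk pos.
have nonneg : 0 <= w k l.
  by rewrite leNgt negative_frozen // -(negative_frozen k.+1 l (leqW Kk)) -leNgt ltW.
have [j /andP [_ dj]] : exists j, true && (0 < A k.+1 j l - A k j l).
  apply: psumr_neq0P => [j _|]; first by rewrite subr_ge0 (imcor_le (evolution k)).
  move: pos; rewrite (imbalance_imcor (evolution k)) (min_l nonneg) add0r.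
  by move=> /gt_eqF /eqP.
have ne : A k.+1 j l != A k j l by rewrite -subr_eq0 (gt_eqF dj).
have [posj _] := imcor_changed (evolution k) j l ne.
have := raised_imbalance_gain k j l ne; rewrite (min_l nonneg).
have := IH j Kk posj; lra.
Qed.

Lemma recurrent_pos_raises i j : recurrent (fun k => 0 < w k i) -> j != i -> E i j ->
  recurrent (fun k => A k.+1 i j != A k i j).
Proof.
move=> rec_i ji Eij; apply: NNPP => /not_recurrentP [k0 unraised].
set k1 := maxn k0 K; set c := A k1 i j.
have A_ij : forall k, (k1 <= k)%N -> A k i j = c.
  apply: (@eventually_const _ (fun k => A k i j)) => k k1k; apply/eqP/negPn/negP.
  by apply: unraised; rewrite (leq_trans (leq_maxl _ _) k1k).
pose capped k := \sum_l Num.min (A k i l) (c + m).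
apply: (@bounded_nondecreasing_jumps _ capped k1 m ((c + m) *+ n) m_gt0).
- move=> k _; apply: ler_sum => l _.
  exact: le_min2 (imcor_le (evolution k) i l) (lexx _).
- move=> k _; apply: le_trans (_ : \sum_(l < n) (c + m) <= _).
    by apply: ler_sum => l _; rewrite ge_min lexx orbT.
  by rewrite sumr_const card_ord.
- move=> k; have [k' kk' pos] := rec_i (maxn k k1).
  exists k'; first exact: leq_trans (leq_maxl _ _) kk'.
  have k1k' : (k1 <= k')%N := leq_trans (leq_maxr _ _) kk'.
  rewrite /capped -(A_ij _ k1k'); apply: (imcor_capped_rowsum (evolution k')) => //.
    exact: pos_imbalance_ge_m k' i (leq_trans (leq_maxr _ _) k1k') pos.
  by have := (evolution_in_Adj k' i j).1 Eij; rewrite lt0r => /andP [].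
Qed.

Lemma raises_recurrent_pos i j : recurrent (fun k => A k.+1 i j != A k i j) ->
  recurrent (fun k => 0 < w k j).
Proof.
move=> rec_ij.
have gain k : (K <= k)%N -> A k.+1 i j != A k i j -> Num.min 0 (w k j) + m <= w k.+1 j.
  move=> Kk ne; have [pos _] := imcor_changed (evolution k) i j ne.
  have := raised_imbalance_gain k i j ne; have := pos_imbalance_ge_m k i Kk pos; lra.
case: (boolP (j \in negatives K)) => [j_neg | j_nonneg].
  have neg k : (K <= k)%N -> w k j < 0 by move=> Kk; rewrite negative_frozen.
  exfalso; apply: (@bounded_nondecreasing_jumps _ (fun k => w k j) K m 0 m_gt0).
  - move=> k Kk; apply: le_trans (imbalance_imcor_min (evolution k) j).
    by rewrite min_r // ltW // neg.
  - by move=> k Kk; rewrite ltW // neg.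
  - move=> k; have [k' kk' ne] := rec_ij (maxn k K).
    have Kk' : (K <= k')%N := leq_trans (leq_maxr _ _) kk'.
    exists k'; first exact: leq_trans (leq_maxl _ _) kk'.
    by rewrite -[X in X + m](min_r (ltW (neg k' Kk'))) gain.
move=> k; have [k' kk' ne] := rec_ij (maxn k K).
have Kk' : (K <= k')%N := leq_trans (leq_maxr _ _) kk'.
exists k'.+1; first exact: leq_trans (leq_maxl _ _) (leqW kk').
have nonneg : 0 <= w k' j by rewrite leNgt negative_frozen.
have := gain k' Kk' ne; rewrite (min_l nonneg) add0r; exact: lt_le_trans m_gt0.
Qed.

Lemma recurrent_pos_connect i j : recurrent (fun k => 0 < w k i) -> connect E i j ->
  recurrent (fun k => 0 < w k j).
Proof.
move=> rec_i /connectP [p p_path ->] {j}.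
elim: p i rec_i p_path => [//|y p IH] i rec_i /andP [Eiy p_path] /=.
apply: IH p_path; have [-> // | yi] := eqVneq y i.
exact: raises_recurrent_pos i y (recurrent_pos_raises i y rec_i yi Eiy).
Qed.

End PositiveLowerBound.

Lemma frozen_negatives_empty : strongly_connected E -> negatives K = set0.
Proof.
move=> sc; apply/setP => s; rewrite in_set0; apply/negP => s_neg.
have [m m_gt0 m_le] := exists_pos_lower_bound _ _ (w K).
have [i rec_i] := exists_recurrent_pos s s_neg.
have si : i != s by apply: contraNneq (recurrent_pos_not_negative i rec_i) => ->.
have rec_s := recurrent_pos_connect m_gt0 m_le i s rec_i (sc i s si).
by move: (recurrent_pos_not_negative s rec_s); rewrite s_neg.
Qed.

End FrozenNegatives.

Lemma evolution_balanced : strongly_connected E ->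
  exists K, weight_balanced (A K) /\ forall k, (K <= k)%N -> A k = A K.
Proof.
move=> sc; have [K frozen] := negatives_eventually_const.
have balanced k : (K <= k)%N -> weight_balanced (A k).
  move=> Kk; apply: imbalance_ge0_balanced => l; rewrite leNgt.
  have := frozen_negatives_empty frozen sc; rewrite -(frozen k Kk) => /setP /(_ l).
  by rewrite !inE => ->.
exists K; split; first exact: balanced.
by apply: eventually_const => k Kk; apply: imcor_balanced (evolution k) (balanced k Kk).
Qed.

End Evolution.

Theorem theorem4p4 (R : realType) (n : nat) (E : rel 'I_n)
  (A : nat -> 'M[R]_n) :
  strongly_connected E ->
  in_Adj E (A 0%N) ->
  (forall k : nat, f_imcor E (A k) (A k.+1)) ->
  exists K : nat, weight_balanced (A K) /\ (forall k : nat, (K <= k)%N -> A k = A K).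
Proof. by move=> sc A0 evolution; apply: evolution_balanced. Qed.
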